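(* Let $k\ge 4$ be even and let $G=(V,E)$ be a $k$-uniform cored hypergraph, with Laplacian tensor $\mathcal L$ and signless Laplacian tensor $\mathcal Q$. Then $G$ is odd-bipartite, and hence $\lambda(\mathcal L)=\lambda(\mathcal Q)$.
   Context: A $k$-uniform hypergraph $G=(V,E)$ ($k\ge 3$) is a simple undirected hypergraph with vertex set $V=[n]$ ($n\ge k$) and a nonempty edge set $E$ of $k$-element subsets of $V$. The degree $d_i$ of vertex $i$ is the number of edges containing $i$. $G$ is a cored hypergraph if every edge $e\in E$ contains a vertex of degree one. The adjacency tensor $\mathcal A$ is the order-$k$, dimension-$n$ tensor with $a_{i_1\ldots i_k}=\frac{1}{(k-1)!}$ if $\{i_1,\ldots,i_k\}\in E$ and $0$ otherwise; $\mathcal D$ is the diagonal tensor with $d_{i\ldots i}=d_i$; $\mathcal L=\mathcal D-\mathcal A$ and $\mathcal Q=\mathcal D+\mathcal A$. For a real order-$k$ dimension-$n$ tensor $\mathcal T$ and $\mathbf x\in\mathbb R^n$, $\mathcal T\mathbf x^{k-1}\in\mathbb R^n$ has $i$-th entry $\sum_{i_2,\ldots,i_k\in[n]}t_{ii_2\ldots i_k}x_{i_2}\cdots x_{i_k}$. A real $\lambda$ is an H-eigenvalue of $\mathcal T$ if there is $\mathbf x\in\mathbb R^n\setminus\{0\}$ (an H-eigenvector) with $(\mathcal T\mathbf x^{k-1})_i=\lambda x_i^{k-1}$ for all $i$; $\lambda(\mathcal T)$ denotes the largest H-eigenvalue. For even $k$, $G$ is odd-bipartite if there is a partition $V=V_1\cup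 V_2$ with $V_1,V_2\neq\emptyset$ disjoint such that every edge meets $V_1$ in an odd number of vertices. *)

From HB Require Import structures.
From mathcomp Require Import all_boot all_order all_algebra.
Unset Printing Implicit Defensive.
Import Order.TTheory GRing.Theory Num.Theory.
Local Open Scope ring_scope.

Definition uniform_hypergraph {n : nat} (k : nat) (E : {set {set 'I_n}}) : Prop :=
  [/\ (3 <= k)%N, (k <= n)%N, E != set0 & forall e, e \in E -> #|e| = k].

Definition hdeg {n : nat} (E : {set {set 'I_n}}) (i : 'I_n) : nat :=
  #|[set e in E | i \in e]|.

Definition cored {n : nat} (E : {set {set 'I_n}}) : Prop :=
  forall e, e \in E -> exists2 i, i \in e & hdeg E i = 1%N.

Definition odd_bipartite {n : nat} (E : {set {set 'I_n}}) : Prop :=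
  exists V1 : {set 'I_n},
    [/\ V1 != set0, ~: V1 != set0 &
        forall e, e \in E -> odd #|e :&: V1|].

(* An order-k, dimension-n real tensor: the entry t_{i i_2 ... i_k} is
   T i f where f : {ffun 'I_k.-1 -> 'I_n} lists (i_2, ..., i_k). *)
Definition tensor (R : Type) (n k : nat) := 'I_n -> {ffun 'I_k.-1 -> 'I_n} -> R.

Definition tapply {R : realFieldType} {n k : nat} (T : tensor R n k)
  (x : 'I_n -> R) (i : 'I_n) : R :=
  \sum_(f : {ffun 'I_k.-1 -> 'I_n}) T i f * \prod_(j < k.-1) x (f j).

Definition adj_tensor (R : realFieldType) {n : nat} (k : nat) (E : {set {set 'I_n}})
  : tensor R n k :=
  fun i f => if (i |: [set f j | j in 'I_k.-1]) \in E
             then ((k.-1)`!%:R)^-1 else 0.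

Definition deg_tensor (R : realFieldType) {n : nat} (k : nat) (E : {set {set 'I_n}})
  : tensor R n k :=
  fun i f => if [forall j, f j == i] then (hdeg E i)%:R else 0.

Definition lap_tensor (R : realFieldType) {n : nat} (k : nat) (E : {set {set 'I_n}})
  : tensor R n k := fun i f => deg_tensor R k E i f - adj_tensor R k E i f.

Definition slap_tensor (R : realFieldType) {n : nat} (k : nat) (E : {set {set 'I_n}})
  : tensor R n k := fun i f => deg_tensor R k E i f + adj_tensor R k E i f.

Definition H_eigenvalue {R : realFieldType} {n k : nat} (T : tensor R n k)
  (lam : R) : Prop :=
  exists x : 'I_n -> R, (exists i, x i != 0) /\
    forall i, tapply T x i = lam * x i ^+ k.-1.

Definition largest_H_eigenvalue {R : realFieldType} {n k : nat}
  (T : tensor R n k) (lam : R) : Prop :=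
  H_eigenvalue T lam /\ forall mu, H_eigenvalue T mu -> mu <= lam.

From mathcomp Require Import all_boot all_order all_algebra.
Set Implicit Arguments.
Unset Strict Implicit.

Import GRing.Theory.
Local Open Scope ring_scope.

(** Choosing one vertex of degree one in every edge of a cored hypergraph
  gives a set V1 that meets each edge in exactly its chosen vertex; as edges
  have at least two vertices, V1 is a proper nonempty set, so G is
  odd-bipartite.  Let S be the diagonal signature with S_vv = -1 on V1 and 1
  elsewhere.  Since every edge meets V1 in an odd number of vertices, the
  change of variables x |-> S x flips the sign of every entry of the adjacency
  tensor, while it leaves the degree tensor unchanged because k - 1 is odd.
  Hence it maps H-eigenvectors of L to H-eigenvectors of Q with the same
  eigenvalue, and back. *)

Section CoredOddBipartite.
Variables (n : nat) (E : {set {set 'I_n}}).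

Lemma hdeg1_edge_uniq v e e' :
  hdeg E v = 1%N -> e \in E -> v \in e -> e' \in E -> v \in e' -> e = e'.
Proof.
rewrite /hdeg => /eqP/cards1P [e0 edges_v] eE ve e'E ve'.
have : e \in [set e in E | v \in e] by rewrite inE eE ve.
have : e' \in [set e in E | v \in e] by rewrite inE e'E ve'.
by rewrite edges_v !inE => /eqP -> /eqP ->.
Qed.

Hypothesis E_cored : cored E.

Definition core_vertex (e : {set 'I_n}) := [pick v in e | hdeg E v == 1%N].

Definition core_vertices := [set v | [exists e in E, core_vertex e == Some v]].

Lemma core_vertexP e :
  e \in E -> exists2 v, core_vertex e = Some v & (v \in e) && (hdeg E v == 1%N).
Proof.
move=> eE; rewrite /core_vertex; case: pickP => [v pv | no_core]; first by exists v.
by have [v ve /eqP dv] := E_cored eE; move: (no_core v); rewrite ve dv.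
Qed.

Lemma edge_meet_core_vertices e :
  e \in E -> exists v, e :&: core_vertices = [set v].
Proof.
move=> eE; have [v core_e /andP [ve _]] := core_vertexP eE; exists v.
apply/setP => w; rewrite !inE; apply/andP/eqP => [[we] | ->].
  case/existsP=> e' /andP [e'E /eqP core_e'].
  have [w' core_e'' /andP [w'e' /eqP dw']] := core_vertexP e'E.
  move: core_e'; rewrite core_e'' => -[w'w]; subst w'.
  rewrite -(hdeg1_edge_uniq dw' eE we e'E w'e') core_e in core_e''.
  by case: core_e''.
by split=> //; apply/existsP; exists e; rewrite eE core_e eqxx.
Qed.

Lemma cored_odd_bipartite :
  E != set0 -> (forall e, e \in E -> (1 < #|e|)%N) -> odd_bipartite E.
Proof.
case/set0Pn=> e eE big_edges; exists core_vertices.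
have [v e_core] := edge_meet_core_vertices eE.
have : v \in e :&: core_vertices by rewrite e_core set11.
rewrite inE => /andP [ve v_core]; split.
- by apply/set0Pn; exists v.
- have : (0 < #|e :\ v|)%N by move: (big_edges e eE); rewrite (cardsD1 v) ve.
  case/card_gt0P=> w; rewrite !inE => /andP [wv we].
  apply/set0Pn; exists w; rewrite inE; apply: contra wv => w_core.
  by rewrite -in_set1 -e_core inE we.
- by move=> e' e'E; have [v' ->] := edge_meet_core_vertices e'E; rewrite cards1.
Qed.

End CoredOddBipartite.

Lemma prod_setU1_imset (R : comPzSemiRingType) (n m : nat) (g : 'I_n -> R)
    (i : 'I_n) (f : {ffun 'I_m -> 'I_n}) :
  #|i |: [set f j | j in 'I_m]| = m.+1 ->
  \prod_(v in i |: [set f j | j in 'I_m]) g v = g i * \prod_(j < m) g (f j).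
Proof.
set S := [set f j | j in 'I_m]; rewrite cardsU1 => card_iS.
have S_le : (#|S| <= m)%N by rewrite (leq_trans (leq_imset_card _ _)) ?card_ord.
have iS : i \notin S.
  by move: card_iS S_le; case: (i \notin S) => //; rewrite add0n => ->; rewrite ltnn.
have f_inj : {in 'I_m &, injective f}.
  by apply/imset_injP; move: card_iS; rewrite iS card_ord add1n => -[->].
by rewrite big_setU1 //= big_imset.
Qed.

Section SignSimilarity.
Variables (R : realFieldType) (n k : nat) (V : {set 'I_n}).

Definition setsign (v : 'I_n) : R := (-1) ^+ (v \in V).

Lemma setsignK v : setsign v * setsign v = 1.
Proof. by rewrite -expr2 sqrr_sign. Qed.

Lemma prod_setsign (A : {set 'I_n}) :
  \prod_(v in A) setsign v = (-1) ^+ #|A :&: V|.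
Proof.
rewrite prodrXr -sum1_card big_mkcond [in RHS]big_mkcond /=.
by congr (_ ^+ _); apply: eq_bigr => v _; rewrite inE; case: (v \in A); case: (v \in V).
Qed.

Lemma setsign_expr_odd m v : odd m -> setsign v ^+ m = setsign v.
Proof. by move=> m_odd; rewrite -exprM -[LHS]signr_odd oddM m_odd andbT oddb. Qed.

(* T2 = S^{-(k-1)} T1 S, entrywise, for the signature S = diag(setsign). *)
Definition sign_similar (T1 T2 : tensor R n k) :=
  forall i f, T2 i f * \prod_(j < k.-1) setsign (f j) = setsign i * T1 i f.

Lemma sign_similar_sym T1 T2 : sign_similar T1 T2 -> sign_similar T2 T1.
Proof.
move=> sim i f; set P := \prod_(j < k.-1) _.
have PP : P * P = 1 by rewrite -big_split big1 // => j _; apply: setsignK.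
by rewrite -[RHS]mulr1 -PP mulrA -(mulrA (setsign i)) sim mulrA setsignK mul1r.
Qed.

Lemma tapply_sign_similar T1 T2 x i : sign_similar T1 T2 ->
  tapply T2 (fun v => setsign v * x v) i = setsign i * tapply T1 x i.
Proof.
move=> sim; rewrite /tapply mulr_sumr; apply: eq_bigr => f _.
by rewrite big_split /= [LHS]mulrA sim mulrA.
Qed.

Hypothesis km1_odd : odd k.-1.

Lemma H_eigenvalue_sign_similar T1 T2 lam :
  sign_similar T1 T2 -> H_eigenvalue T1 lam -> H_eigenvalue T2 lam.
Proof.
move=> sim [x [[i0 x_i0] eig]]; exists (fun v => setsign v * x v); split.
  by exists i0; rewrite mulf_eq0 negb_or signr_eq0.
by move=> i; rewrite (tapply_sign_similar _ _ sim) eig exprMn setsign_expr_odd // mulrCA.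
Qed.

Lemma largest_H_eigenvalue_sign_similar T1 T2 lam : sign_similar T1 T2 ->
  largest_H_eigenvalue T1 lam <-> largest_H_eigenvalue T2 lam.
Proof.
move=> sim; have eig_eq mu : H_eigenvalue T1 mu <-> H_eigenvalue T2 mu.
  by split; apply: H_eigenvalue_sign_similar => //; apply: sign_similar_sym.
by split=> -[eig_lam lam_max]; split=> [|mu /eig_eq]; by [apply/eig_eq | apply: lam_max].
Qed.

End SignSimilarity.

Arguments sign_similar {R n k} V T1 T2.

Section LaplacianSignlessLaplacian.
Variables (R : realFieldType) (n k : nat) (E : {set {set 'I_n}}) (V : {set 'I_n}).
Hypothesis E_uniform : forall e, e \in E -> #|e| = k.
Hypothesis V_odd : forall e, e \in E -> odd #|e :&: V|.
Hypothesis k_gt0 : (0 < k)%N.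
Local Notation s := (@setsign R n V).

Lemma adj_tensor_sign i f :
  adj_tensor R k E i f * \prod_(j < k.-1) s (f j) = - (s i * adj_tensor R k E i f).
Proof.
rewrite /adj_tensor; case: ifP => [eE | _]; last by rewrite mul0r mulr0 oppr0.
have card_edge : #|i |: [set f j | j in 'I_k.-1]| = k.-1.+1 by rewrite prednK ?E_uniform.
have := prod_setsign R V (i |: [set f j | j in 'I_k.-1]).
rewrite prod_setU1_imset // -signr_odd V_odd // expr1 => prod_edge.
have -> : \prod_(j < k.-1) s (f j) = - s i.
  by move: (congr1 (fun y => s i * y) prod_edge); rewrite mulrA setsignK mul1r mulrN1.
by rewrite mulrN mulrC.
Qed.

Hypothesis km1_odd : odd k.-1.

Lemma deg_tensor_sign i f :
  deg_tensor R k E i f * \prod_(j < k.-1) s (f j) = s i * deg_tensor R k E i f.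
Proof.
rewrite /deg_tensor; case: ifP => [/forallP f_const | _]; last by rewrite mul0r mulr0.
rewrite (eq_bigr (fun _ => s i)) => [|j _]; last by rewrite (eqP (f_const j)).
by rewrite prodr_const card_ord setsign_expr_odd // mulrC.
Qed.

Lemma sign_similar_lap_slap : sign_similar V (lap_tensor R k E) (slap_tensor R k E).
Proof.
by move=> i f; rewrite /lap_tensor /slap_tensor mulrDl deg_tensor_sign adj_tensor_sign mulrBr.
Qed.

End LaplacianSignlessLaplacian.

Theorem proposition3p2 (R : realFieldType) (n k : nat) (E : {set {set 'I_n}}) :
  uniform_hypergraph k E -> (4 <= k)%N -> ~~ odd k -> cored E ->
  odd_bipartite E /\
  (forall lam : R, largest_H_eigenvalue (lap_tensor R k E) lam <->
                   largest_H_eigenvalue (slap_tensor R k E) lam).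
Proof.
move=> [_ _ E_nonempty E_uniform] k_ge4 k_even E_cored.
have k_gt0 : (0 < k)%N by apply: leq_trans k_ge4.
have km1_odd : odd k.-1 by move: k_even; rewrite -{1}(prednK k_gt0) /= negbK.
have E_bip : odd_bipartite E.
  apply: cored_odd_bipartite => // e eE.
  by rewrite E_uniform // (leq_trans _ k_ge4).
split=> // lam; have [V [_ _ V_odd]] := E_bip.
apply: (largest_H_eigenvalue_sign_similar km1_odd).
exact: sign_similar_lap_slap E_uniform V_odd k_gt0 km1_odd.
Qed.
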